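(* Haechi (described in the context) guarantees sharded system liveness: every transaction received by at least one honest node is eventually handled by the relevant shards and gets a response from the sharded system.
   Context: Setting. A sharded blockchain consists of shards $S_0,S_1,\dots,S_m$ ($S_0$ the beacon shard), each running a BFT state-machine-replication consensus and always satisfying $3f_i+1<|S_i|$ ($f_i$ Byzantine nodes out of $|S_i|$), hence each shard has intra-shard safety and intra-shard liveness (a transaction received by at least one honest node of the shard is eventually handled and answered by the shard); messages between honest parties are not dropped. OTXs are transactions calling order-sensitive contracts. Non-OTX transactions are handled by the underlying intra-shard consensus (intra-shard transactions) or by a two-phase cross-shard protocol (cross-shard transactions), which are assumed to provide responses. Haechi for OTXs: the sender shard processes an OTX in a block and forwards it in a certified CrossLink (block timestamp, OTX list, shard id, block height) to the beacon chain; the beacon chain, once it has received a consecutive-height CrossLink from every shard, selects all CrossLinks with timestamp at most the minimum over shards of the last received timestamp and orders their OTXs by block timestamp then in-block index (agreed by BFT consensus); contract shards execute called contracts in this order and return commit/abort results; the sender shard coordinates the final commit or abort and notifies related shards. *)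

(* An abstract execution model of a sharded blockchain
   running Haechi for order-sensitive transactions (OTXs).
   Shards are 'I_m.+1 (S_0 = ord0 is the beacon shard); time is nat. *)
From mathcomp Require Import all_boot.

Record run (m : nat) : Type := Run {
  tx_t : Type;
  is_otx : tx_t -> bool;                        (* calls an order-sensitive contract *)
  sender : tx_t -> 'I_m.+1;
  contract_shards : tx_t -> {set 'I_m.+1};      (* shards holding the called contracts *)
  related : tx_t -> {set 'I_m.+1};              (* shards that must handle the tx *)
  received : tx_t -> nat -> Prop;               (* some honest node of the sender shard
                                                   has received tx at time t *)
  handled : tx_t -> 'I_m.+1 -> nat -> Prop;
  responded : tx_t -> nat -> Prop;
  block_produced : 'I_m.+1 -> nat -> nat -> Prop; (* block (shard i, height h) committed at t *)
  block_ts : 'I_m.+1 -> nat -> nat;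
  in_block : tx_t -> 'I_m.+1 -> nat -> Prop;    (* tx is in the OTX list of block (i, h) *)
  crosslink_recv : 'I_m.+1 -> nat -> nat -> Prop; (* beacon has received the certified
                                                   CrossLink of block (i,h) by time t *)
  ordered : tx_t -> nat -> Prop;                (* beacon has ordered tx (BFT-agreed) at t *)
  contract_result : tx_t -> 'I_m.+1 -> nat -> Prop; (* contract shard c returned its
                                                   commit/abort result for tx at t *)
  finalized : tx_t -> nat -> Prop               (* sender shard decided final commit/abort *)
}.

Arguments tx_t {m} r.
Arguments is_otx {m} r.
Arguments sender {m} r.
Arguments contract_shards {m} r.
Arguments related {m} r.
Arguments received {m} r.
Arguments handled {m} r.
Arguments responded {m} r.
Arguments block_produced {m} r.
Arguments block_ts {m} r.
Arguments in_block {m} r.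
Arguments crosslink_recv {m} r.
Arguments ordered {m} r.
Arguments contract_result {m} r.
Arguments finalized {m} r.

Section Haechi.
Variables (m : nat) (R : run m).

Definition consecutive_upto (j : 'I_m.+1) (hj : nat) (t : nat) : Prop :=
  forall k, k <= hj -> crosslink_recv R j k t.

Definition beacon_selectable (i : 'I_m.+1) (h : nat) (t : nat) : Prop :=
  crosslink_recv R i h t /\
  forall j : 'I_m.+1, exists hj, consecutive_upto j hj t /\ block_ts R i h <= block_ts R j hj.

Record haechi_assumptions : Prop := {
  (* non-OTX transactions: intra-shard consensus / two-phase cross-shard
     protocol are assumed to provide responses *)
  nonotx_live : forall tx t, ~~ is_otx R tx -> received R tx t ->
    exists t', t <= t' /\ responded R tx t' /\
      forall j, j \in related R tx -> exists tj, handled R tx j tj;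
  (* intra-shard liveness of the sender shard: it processes the OTX in a block *)
  sender_live : forall tx t, is_otx R tx -> received R tx t ->
    exists h tb, in_block R tx (sender R tx) h /\
      block_produced R (sender R tx) h tb /\ t <= tb;
  chain_growth : forall i h, exists t, block_produced R i h t;
  ts_increasing : forall i h, block_ts R i h < block_ts R i h.+1;
  crosslink_delivery : forall i h t, block_produced R i h t ->
    exists t', t <= t' /\ crosslink_recv R i h t';
  crosslink_persist : forall i h t t', crosslink_recv R i h t -> t <= t' ->
    crosslink_recv R i h t';
  (* beacon ordering rule (agreed by BFT consensus of the beacon shard) *)
  beacon_order : forall tx i h t, is_otx R tx -> in_block R tx i h ->
    beacon_selectable i h t -> exists t', t <= t' /\ ordered R tx t';
  contract_exec : forall tx t, is_otx R tx -> ordered R tx t ->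
    forall c, c \in contract_shards R tx ->
      exists t', t <= t' /\ contract_result R tx c t';
  sender_coord : forall tx t to, is_otx R tx -> ordered R tx to -> to <= t ->
    (forall c, c \in contract_shards R tx -> exists tc, tc <= t /\ contract_result R tx c tc) ->
    exists t', t <= t' /\ finalized R tx t';
  sender_notify : forall tx t, is_otx R tx -> finalized R tx t ->
    (exists t', t <= t' /\ responded R tx t') /\
    forall j, j \in related R tx -> exists tj, t <= tj /\ handled R tx j tj
}.

Definition sharded_liveness : Prop :=
  forall tx t, received R tx t ->
    exists t', t <= t' /\ responded R tx t' /\
      forall j, j \in related R tx -> exists tj, handled R tx j tj.

End Haechi.

Arguments consecutive_upto {m} R j hj t.
Arguments beacon_selectable {m} R i h t.
Arguments haechi_assumptions {m} R.
Arguments sharded_liveness {m} R.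

(* An OTX received by the sender shard is put in a block, whose CrossLink
   reaches the beacon.  Since every shard keeps producing blocks and
   timestamps grow at least as fast as heights, the beacon eventually holds,
   for every shard, consecutive CrossLinks up to a height whose timestamp
   exceeds that of the OTX's block; the block is then selectable, so the OTX
   gets ordered.  Each of the finitely many contract shards then returns a
   result, so at some common time all results are in; the sender shard
   finalizes, responds and notifies the related shards.  Non-OTXs are live
   by assumption. *)
From mathcomp Require Import all_boot.

Set Implicit Arguments.
Unset Strict Implicit.
Unset Printing Implicit Defensive.

Local Arguments nonotx_live {m R} _ {tx t}.
Local Arguments sender_live {m R} _ {tx t}.
Local Arguments chain_growth {m R}.
Local Arguments ts_increasing {m R}.
Local Arguments crosslink_delivery {m R} _ {i h t}.
Local Arguments crosslink_persist {m R} _ {i h t t'}.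
Local Arguments beacon_order {m R} _ {tx i h t}.
Local Arguments contract_exec {m R} _ {tx t} _ _ {c}.
Local Arguments sender_coord {m R} _ {tx t to}.
Local Arguments sender_notify {m R} _ {tx t}.

Lemma eventually_forall_seq (I : eqType) (P : I -> nat -> Prop) (s : seq I) :
  (forall i t t', P i t -> t <= t' -> P i t') ->
  (forall i, i \in s -> exists t, P i t) ->
  exists T, forall i, i \in s -> P i T.
Proof.
move=> P_mono; elim: s => [|i s IHs] P_ev; first by exists 0.
have [T HT] := IHs (fun j js => P_ev j (mem_behead (s := i :: s) js)).
have [ti Hi] := P_ev i (mem_head i s).
exists (maxn T ti) => j; rewrite inE => /predU1P [-> | js].
- exact: P_mono Hi (leq_maxr _ _).
- exact: P_mono (HT j js) (leq_maxl _ _).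
Qed.

Lemma eventually_forall (I : finType) (P : I -> nat -> Prop) :
  (forall i t t', P i t -> t <= t' -> P i t') ->
  (forall i, exists t, P i t) -> exists T, forall i, P i T.
Proof.
move=> P_mono P_ev.
have [T HT] := @eventually_forall_seq I P (enum I) P_mono (fun i _ => P_ev i).
by exists T => i; apply: HT; rewrite mem_enum.
Qed.

Section HaechiLiveness.
Variables (m : nat) (R : run m).
Hypothesis H : haechi_assumptions R.

Lemma block_ts_ge_height j k : k <= block_ts R j k.
Proof.
elim: k => [|k IHk] //.
exact: leq_ltn_trans IHk (ts_increasing H j k).
Qed.

Lemma consecutive_upto_persist j hj t t' :
  consecutive_upto R j hj t -> t <= t' -> consecutive_upto R j hj t'.
Proof. move=> Hc le_tt' k le_k; exact: (crosslink_persist H (Hc k le_k) le_tt'). Qed.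

Lemma consecutive_upto_eventually j hj : exists T, consecutive_upto R j hj T.
Proof.
have [T HT] : exists T, forall k, k \in iota 0 hj.+1 -> crosslink_recv R j k T.
  apply: eventually_forall_seq => [k t t' | k _]; first exact: (crosslink_persist H).
  have [tp produced] := chain_growth H j k.
  by have [t' [_ recv]] := crosslink_delivery H produced; exists t'.
by exists T => k le_k; apply: HT; rewrite mem_iota add0n ltnS.
Qed.

Lemma beacon_selectable_eventually i h tb : block_produced R i h tb ->
  exists t, tb <= t /\ beacon_selectable R i h t.
Proof.
move=> produced.
have [t2 [le_tb_t2 recv]] := crosslink_delivery H produced.
have [T HT] : exists T, forall j, consecutive_upto R j (block_ts R i h) T.
  apply: eventually_forall => [j t t' | j]; first exact: consecutive_upto_persist.
  exact: consecutive_upto_eventually.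
exists (maxn t2 T); split; first exact: leq_trans le_tb_t2 (leq_maxl _ _).
split; first exact: (crosslink_persist H recv (leq_maxl _ _)).
move=> j; exists (block_ts R i h); split; last exact: block_ts_ge_height.
exact: consecutive_upto_persist (HT j) (leq_maxr _ _).
Qed.

Lemma otx_ordered tx t : is_otx R tx -> received R tx t ->
  exists to, t <= to /\ ordered R tx to.
Proof.
move=> otx recv.
have [h [tb [in_blk [produced le_t_tb]]]] := sender_live H otx recv.
have [t1 [le_tb_t1 sel]] := beacon_selectable_eventually produced.
have [to [le_t1_to ord]] := beacon_order H otx in_blk sel.
by exists to; split=> //; apply: leq_trans le_t_tb (leq_trans le_tb_t1 le_t1_to).
Qed.

Lemma contract_results_eventually tx to : is_otx R tx -> ordered R tx to ->
  exists T, forall c, c \in contract_shards R tx ->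
    exists tc, tc <= T /\ contract_result R tx c tc.
Proof.
move=> otx ord.
have [T HT] : exists T, forall c, c \in enum (contract_shards R tx) ->
    exists tc, tc <= T /\ contract_result R tx c tc.
  apply: eventually_forall_seq => [c t t' [tc [le_tc res]] le_t | c].
    by exists tc; split=> //; apply: leq_trans le_t.
  rewrite mem_enum => c_in.
  by have [t' [_ res]] := contract_exec H otx ord c_in; exists t', t'.
by exists T => c c_in; apply: HT; rewrite mem_enum.
Qed.

Lemma otx_finalized tx t : is_otx R tx -> received R tx t ->
  exists tf, t <= tf /\ finalized R tx tf.
Proof.
move=> otx recv.
have [to [le_t_to ord]] := otx_ordered otx recv.
have [T HT] := contract_results_eventually otx ord.
have all_results c : c \in contract_shards R tx ->
    exists tc, tc <= maxn T to /\ contract_result R tx c tc.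
  move=> /HT [tc [le_tc res]].
  by exists tc; split=> //; apply: leq_trans le_tc (leq_maxl _ _).
have [tf [le_tf fin]] := sender_coord H otx ord (leq_maxr T to) all_results.
by exists tf; split=> //; apply: leq_trans le_t_to (leq_trans (leq_maxr T to) le_tf).
Qed.

End HaechiLiveness.

Theorem theorem3 (m : nat) (R : run m) :
  haechi_assumptions R -> sharded_liveness R.
Proof.
move=> H tx t recv.
have [otx | non_otx] := boolP (is_otx R tx); last exact: (nonotx_live H non_otx recv).
have [tf [le_t_tf fin]] := otx_finalized H otx recv.
have [[tr [le_tf_tr resp]] notified] := sender_notify H otx fin.
exists tr; split; first exact: leq_trans le_t_tf le_tf_tr.
split=> // j j_rel.
by have [tj [_ handled_j]] := notified j j_rel; exists tj.
Qed.
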